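(* Consider the multiobjective optimal control setting, Assumption A and Algorithm 1 described in the context, let $x_0\in\mathbb{X}_N$, and assume in addition that there is $\gamma_{\lambda_1}\in\mathcal K_\infty$ with $|\lambda_1(x)-\lambda_1(x^e)|\le\gamma_{\lambda_1}(\|x-x^e\|)$ for all $x\in\mathbb{X}$, and that $\ell_1(x^e,u^e)=0$. Then the MPC feedback $\mu^N:\mathbb{N}_0\times\mathbb{X}\to\mathbb{U}$ defined by Algorithm 1 renders the set $\mathbb{X}$ forward invariant (the closed loop is well defined and stays in $\mathbb{X}$) and has the infinite-horizon closed-loop performance \[J_1^\infty(x_0,\mu^N):=\sum_{k=0}^\infty\ell_1\big(x_\mu(k,x_0),\mu^N(k,x_\mu(k,x_0))\big)\le J_1^N(x_0,\mathbf{u}^\star_{x_0}),\] where $\mathbf{u}^\star_{x_0}$ is the efficient solution chosen in step (0) of Algorithm 1.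
   Context: Let $f:\mathbb{R}^n\times\mathbb{R}^m\to\mathbb{R}^n$ be continuous and consider $x(k+1)=f(x(k),u(k))$, $x(0)=x_0$; $x_{\mathbf{u}}(k,x_0)$ denotes the solution for control sequence $\mathbf u$. Let $\mathbb{X}\subseteq\mathbb{R}^n$, $\mathbb{U}\subseteq\mathbb{R}^m$, $\mathbb{X}_0\subseteq\mathbb{X}$ be nonempty; horizons $N\ge2$, objectives $s\ge2$. $\mathbb{U}^N(x_0)$ is the set of $\mathbf{u}\in\mathbb{U}^N$ with $x_{\mathbf{u}}(k,x_0)\in\mathbb{X}$ for $k=1,\dots,N-1$ and $x_{\mathbf{u}}(N,x_0)\in\mathbb{X}_0$; $\mathbb{X}_N=\{x_0\in\mathbb{X}:\mathbb{U}^N(x_0)\neq\emptyset\}$. With stage costs $\ell_i:\mathbb{X}\times\mathbb{U}\to\mathbb{R}$ ($i=1,\dots,s$) and continuous $F_1:\mathbb{X}_0\to\mathbb{R}_{\ge0}$: $J_1^N(x_0,\mathbf{u})=\sum_{k=0}^{N-1}\ell_1(x_{\mathbf{u}}(k,x_0),u(k))+F_1(x_{\mathbf{u}}(N,x_0))$, $J_i^N(x_0,\mathbf{u})=\sum_{k=0}^{N-1}\ell_i(x_{\mathbf{u}}(k,x_0),u(k))$ for $i\ge2$. $\mathbf{u}^\star\in\mathbb{U}^N(x_0)$ is efficient if no $\mathbf{u}\in\mathbb{U}^N(x_0)$ satisfies $J_i^N(x_0,\mathbf{u})\le J_i^N(x_0,\mathbf{u}^\star)$ for all $i$ with strict inequality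 for some $i$; $\mathbb{U}^N_{\mathcal P}(x_0)$ is the efficient set. $\mathcal{J}^N(x_0)$ is the set of vectors $(J_i^N(x_0,\mathbf u))_{i=1}^s$, $\mathbf u\in\mathbb{U}^N(x_0)$, $\mathcal{J}^N_{\mathcal P}(x_0)$ the subset for efficient $\mathbf u$; external stability means every $y\in\mathcal{J}^N(x_0)$ dominates componentwise some $y_{\mathcal P}\in\mathcal{J}^N_{\mathcal P}(x_0)$. $\mathcal K_\infty$: continuous strictly increasing unbounded functions $\mathbb{R}_{\ge0}\to\mathbb{R}_{\ge0}$ vanishing at $0$. Assumption A: (i) $(x^e,u^e)\in\mathbb{X}\times\mathbb{U}$ with $f(x^e,u^e)=x^e$; (ii) $\lambda_1:\mathbb{X}\to\mathbb{R}$ bounded below, $\lambda_1(x^e)=0$, $\alpha_{\ell,1}\in\mathcal K_\infty$ with $\ell_1(x,u)-\ell_1(x^e,u^e)+\lambda_1(x)-\lambda_1(f(x,u))\ge\alpha_{\ell,1}(\|x-x^e\|+\|u-u^e\|)$ on $\mathbb{X}\times\mathbb{U}$; (iii) all $\ell_i$ continuous; (iv) $x^e\in\mathbb{X}_0$ and $\kappa:\mathbb{X}_0\to\mathbb{U}$ with $f(x,\kappa(x))\in\mathbb{X}_0$ and $F_1(f(x,\kappa(x)))+\ell_1(x,\kappa(x))\le F_1(x)+\ell_1(x^e,u^e)$ for all $x\in\mathbb{X}_0$; (v) $\mathcal{J}^N_{\mathcal P}(x)$ externally stable for $\mathcal{J}^N(x)$ for all $x\in\mathbb{X}_N$. Algorithm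 1 ($k\in\mathbb N_0$): $x(0)=x_0$, choose any $\mathbf{u}^\star_{x(0)}=\mathbf{u}^\star_{x_0}\in\mathbb{U}^N_{\mathcal P}(x(0))$; for $k\ge1$ choose $\mathbf{u}^\star_{x(k)}\in\mathbb{U}^N_{\mathcal P}(x(k))$ with $J_1^N(x(k),\mathbf{u}^\star_{x(k)})\le J_1^N(x(k),\mathbf{u}_{x(k)})$, where $\mathbf{u}_{x(k+1)}:=(u^\star_{x(k)}(1),\dots,u^\star_{x(k)}(N-1),\kappa(x_{\mathbf{u}^\star_{x(k)}}(N,x(k))))$. Feedback $\mu^N(k,x(k)):=u^\star_{x(k)}(0)$, $x(k+1)=f(x(k),\mu^N(k,x(k)))$, $x_\mu(k,x_0):=x(k)$. The statement applies to any admissible choices of efficient solutions. *)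

From HB Require Import structures.
From mathcomp Require Import all_boot all_order all_algebra.
From mathcomp Require Import all_classical all_reals all_analysis.
Set Implicit Arguments.
Unset Strict Implicit.
Unset Printing Implicit Defensive.
Import Order.TTheory GRing.Theory Num.Theory.
Import numFieldNormedType.Exports.
Local Open Scope classical_set_scope.
Local Open Scope ring_scope.

Section MOMPC.
Variables (R : realType) (n m : nat).
Notation state := 'rV[R]_n.
Notation control := 'rV[R]_m.

(* class K_infinity, for functions R_{>=0} -> R_{>=0} represented on R *)
Definition Kinf (a : R -> R) : Prop :=
  a 0 = 0 /\
  {within [set x : R | 0 <= x], continuous a} /\
  (forall x y : R, 0 <= x -> x < y -> a x < a y) /\
  (forall M : R, exists x : R, 0 <= x /\ M < a x).

Fixpoint traj (f : state -> control -> state) (x0 : state)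
    (u : nat -> control) (k : nat) : state :=
  match k with
  | 0 => x0
  | k'.+1 => f (traj f x0 u k') (u k')
  end.

(* u (restricted to 0..N-1) belongs to U^N(x0) *)
Definition admissible (f : state -> control -> state)
    (X X0 : set state) (U : set control) (N : nat) (x0 : state) (u : nat -> control) : Prop :=
  (forall k, (k < N)%N -> U (u k)) /\
  (forall k, (1 <= k)%N -> (k <= N.-1)%N -> X (traj f x0 u k)) /\
  X0 (traj f x0 u N).

Definition feasible_set (f : state -> control -> state)
    (X X0 : set state) (U : set control) (N : nat) : set state :=
  [set x0 | X x0 /\ exists u, admissible f X X0 U N x0 u].

(* objective J_i^N; the objective with index 0 is J_1 (it carries F_1) *)
Definition Jobj (f : state -> control -> state) (s : nat)
    (ell : 'I_s -> state -> control -> R) (F1 : state -> R)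
    (N : nat) (i : 'I_s) (x0 : state) (u : nat -> control) : R :=
  \sum_(k < N) ell i (traj f x0 u k) (u k)
  + (if val i == 0%N then F1 (traj f x0 u N) else 0).

Definition efficient (f : state -> control -> state) (X X0 : set state) (U : set control)
    (s : nat) (ell : 'I_s -> state -> control -> R) (F1 : state -> R)
    (N : nat) (x0 : state) (us : nat -> control) : Prop :=
  admissible f X X0 U N x0 us /\
  ~ (exists u, admissible f X X0 U N x0 u /\
       (forall i, Jobj f ell F1 N i x0 u <= Jobj f ell F1 N i x0 us) /\
       (exists i, Jobj f ell F1 N i x0 u < Jobj f ell F1 N i x0 us)).

Definition externally_stable (f : state -> control -> state)
    (X X0 : set state) (U : set control) (s : nat) (ell : 'I_s -> state -> control -> R)
    (F1 : state -> R) (N : nat) (x0 : state) : Prop :=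
  forall u, admissible f X X0 U N x0 u ->
    exists up, efficient f X X0 U ell F1 N x0 up /\
      (forall i, Jobj f ell F1 N i x0 up <= Jobj f ell F1 N i x0 u).

Definition candidate (f : state -> control -> state) (kappa : state -> control)
    (N : nat) (xk : state) (us : nat -> control) : nat -> control :=
  fun j => if (j < N.-1)%N then us j.+1 else kappa (traj f xk us N).

(* Algorithm 1, steps 0..K: xs is the closed-loop state, us k = u*_{x(k)} *)
Definition alg1_upto (f : state -> control -> state) (X X0 : set state) (U : set control)
    (s : nat) (ell : 'I_s -> state -> control -> R) (F1 : state -> R)
    (kappa : state -> control) (N : nat) (i1 : 'I_s) (x0 : state)
    (xs : nat -> state) (us : nat -> nat -> control) (K : nat) : Prop :=
  xs 0%N = x0 /\ efficient f X X0 U ell F1 N (xs 0%N) (us 0%N) /\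
  forall k, (k < K)%N ->
    xs k.+1 = f (xs k) (us k 0%N) /\
    efficient f X X0 U ell F1 N (xs k.+1) (us k.+1) /\
    Jobj f ell F1 N i1 (xs k.+1) (us k.+1)
      <= Jobj f ell F1 N i1 (xs k.+1) (candidate f kappa N (xs k) (us k)).

End MOMPC.

From HB Require Import structures.
From mathcomp Require Import all_boot all_order all_algebra.
From mathcomp Require Import all_classical all_reals all_analysis.
From mathcomp Require Import lra zify.
Import Order.TTheory GRing.Theory Num.Theory.
Import numFieldNormedType.Exports.
Local Open Scope classical_set_scope.
Local Open Scope ring_scope.
Set Implicit Arguments.
Unset Strict Implicit.

(* Strict dissipativity makes the rotated stage cost [l x u + lam x - lam (f x u)]
   at least [alpha |x - xe|], in particular nonnegative.  Along the closed loop
   the cost [V k] of the chosen efficient solution drops by at least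
   [l (x k) (u k)] per step: the shifted solution completed by [kappa] is
   admissible at the next state, costs at most [V k - l (x k) (u k)] by the
   terminal condition, and Algorithm 1 picks a solution that is no more
   expensive in the first objective.  Hence [V k + lam (x k)] is nonincreasing;
   it is also nonnegative, being a sum of rotated costs plus [F + lam] at the
   terminal state, where [F + lam >= 0] by the same argument applied to the
   terminal controller.  So the rotated costs are summable, [x k] tends to [xe],
   [lam (x k)] tends to [0], and telescoping turns [V k + sum of l <= V 0] into
   the performance bound.  Each step is feasible because external stability
   yields an efficient solution dominating the shifted one. *)

Section Kinf.
Variables (R : realType) (a : R -> R).
Hypothesis Ka : Kinf a.

Lemma Kinf_lt t u : 0 <= t -> t < u -> a t < a u.
Proof. by case: Ka => _ [_ [+ _]]; apply. Qed.

Lemma Kinf_le t u : 0 <= t -> t <= u -> a t <= a u.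
Proof. by move=> t0; rewrite le_eqVlt => /predU1P[->//|/(Kinf_lt t0)/ltW]. Qed.

Lemma Kinf_ge0 t : 0 <= t -> 0 <= a t.
Proof. by case: Ka => a0 _ t0; rewrite -a0 Kinf_le. Qed.

Lemma Kinf_gt0 t : 0 < t -> 0 < a t.
Proof. by case: Ka => a0 _ t0; rewrite -a0 Kinf_lt. Qed.

Lemma Kinf_cvg0 (e : nat -> R) :
  (forall k, 0 <= e k) -> e @ \oo --> 0 -> a \o e @ \oo --> 0.
Proof.
case: Ka => a0 [ac _] e0 ecvg; apply/cvgrPdist_lt => eps eps0.
have /cvgrPdist_lt/(_ eps eps0) := proj1 (subspace_continuousP _ _) ac 0 (lexx 0).
rewrite /within /from_subspace /= a0; case/nbhs_ballP => del del0 near_a.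
move/cvgrPdist_lt: ecvg => /(_ _ del0); apply: filterS => k.
by move=> ek; apply: near_a (e0 k).
Qed.

Lemma Kinf_cvg0_inv (e : nat -> R) :
  (forall k, 0 <= e k) -> a \o e @ \oo --> 0 -> e @ \oo --> 0.
Proof.
move=> e0 aecvg; apply/cvgrPdist_lt => eps eps0.
move/cvgrPdist_lt: aecvg => /(_ _ (Kinf_gt0 eps0)); apply: filterS => k /=.
rewrite !sub0r !normrN !ger0_norm ?Kinf_ge0 // => aek.
by rewrite ltNge; apply: contraTN aek => /(Kinf_le (ltW eps0)); rewrite -leNgt.
Qed.

End Kinf.

Lemma sum_le_decrease (R : numDomainType) (d W : nat -> R) K :
  (forall k, W k.+1 + d k <= W k) -> \sum_(k < K) d k + W K <= W 0%N.
Proof.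
move=> Wd; elim: K => [|K IH]; first by rewrite big_ord0 add0r.
by rewrite big_ord_recr /= -addrA; apply: le_trans IH; rewrite lerD2l addrC.
Qed.

Lemma sum_rotated (R : numDomainType) (c lam : nat -> R) K :
  \sum_(k < K) (c k + lam k - lam k.+1) = \sum_(k < K) c k + lam 0%N - lam K.
Proof.
under eq_bigr do rewrite -addrA -opprB.
rewrite big_split sumrN /= -(big_mkord xpredT (fun k => lam k.+1 - lam k)).
by rewrite telescope_sumr // opprB addrA.
Qed.

Lemma dissipation_cvg (R : realType) (alpha gamma : R -> R) (e d W lam : nat -> R) c :
  Kinf alpha -> Kinf gamma -> (forall k, 0 <= e k) ->
  (forall k, alpha (e k) <= d k) -> (forall k, `|lam k| <= gamma (e k)) ->
  (forall k, W k.+1 + d k <= W k) -> (forall k, c <= W k) ->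
  cvgn (series d) /\ lam @ \oo --> 0.
Proof.
move=> Ka Kg e0 alpha_d lam_gamma Wd cW.
have d0 k : 0 <= d k by apply: le_trans (alpha_d k); apply: Kinf_ge0.
have cvd : cvgn (series d).
  apply: nondecreasing_is_cvgn; first exact: nondecreasing_series.
  exists (W 0%N - c) => _ [K _ <-]; rewrite /series /= big_mkord lerBrDr.
  by apply: le_trans (sum_le_decrease K Wd); rewrite lerD2l.
split=> //.
have alpha_cvg : alpha \o e @ \oo --> 0.
  apply: (squeeze_cvgr _ (cvg_cst 0) (cvg_series_cvg_0 cvd)).
  by apply: nearW => k /=; rewrite Kinf_ge0 ?alpha_d.
have gamma_cvg := Kinf_cvg0 Kg e0 (Kinf_cvg0_inv Ka e0 alpha_cvg).
have gammaN_cvg : (fun k => - gamma (e k)) @ \oo --> 0 by rewrite -oppr0; exact: cvgN.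
apply: (squeeze_cvgr _ gammaN_cvg gamma_cvg).
by apply: nearW => k /=; rewrite -ler_norml.
Qed.

Section Horizon.
Variables (R : realType) (n m : nat) (f : 'rV[R]_n -> 'rV[R]_m -> 'rV[R]_n).

Definition cost (l : 'rV[R]_n -> 'rV[R]_m -> R) (F : 'rV[R]_n -> R) (N : nat)
    (x : 'rV[R]_n) (u : nat -> 'rV[R]_m) : R :=
  \sum_(k < N) l (traj f x u k) (u k) + F (traj f x u N).

Lemma Jobj_cost s N (ell : 'I_s -> 'rV[R]_n -> 'rV[R]_m -> R) F (i : 'I_s) x u :
  val i = 0%N -> Jobj f ell F N i x u = cost (ell i) F N x u.
Proof. by rewrite /Jobj => ->. Qed.

Variable kappa : 'rV[R]_n -> 'rV[R]_m.

Lemma traj_candidate N x u j : (j < N)%N ->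
  traj f (f x (u 0%N)) (candidate f kappa N x u) j = traj f x u j.+1.
Proof.
elim: j => [//|j IH] jN /=.
by rewrite IH 1?ltnW // /candidate ltn_predRL jN.
Qed.

Lemma traj_candidate_end N x u : (0 < N)%N ->
  traj f (f x (u 0%N)) (candidate f kappa N x u) N =
  f (traj f x u N) (kappa (traj f x u N)).
Proof.
case: N => [//|N] _ /=.
by rewrite traj_candidate // /candidate ltnn.
Qed.

Lemma cost_candidate (l : 'rV[R]_n -> 'rV[R]_m -> R) (F : 'rV[R]_n -> R) N x u :
  (0 < N)%N ->
  let xN := traj f x u N in
  cost l F N (f x (u 0%N)) (candidate f kappa N x u) + l x (u 0%N) =
  cost l F N x u + (F (f xN (kappa xN)) + l xN (kappa xN) - F xN).
Proof.
move=> N_gt0; rewrite /cost traj_candidate_end //; case: N N_gt0 => [//|N] _ /=.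
rewrite big_ord_recr big_ord_recl /= traj_candidate //.
under eq_bigr => k _ do
  rewrite (traj_candidate (N:=N.+1) (j:=k) _ _ (ltnW (ltn_ord k))) /candidate ltn_ord.
rewrite /candidate ltnn /bump /=.
under [in RHS]eq_bigr do rewrite add0n add1n.
lra.
Qed.

Variables (X X0 : set 'rV[R]_n) (U : set 'rV[R]_m).
Hypothesis X0_sub : X0 `<=` X.

Lemma admissible_traj_in N x u j : admissible f X X0 U N x u ->
  (0 < j <= N)%N -> X (traj f x u j).
Proof.
case: j => [//|j] [_ [trajX trajX0]] jN.
have [jN1|->] : (j.+1 <= N.-1)%N \/ j.+1 = N by lia.
  exact: trajX.
exact: X0_sub.
Qed.

Hypothesis kappa_invariant : forall x, X0 x -> U (kappa x) /\ X0 (f x (kappa x)).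

Lemma admissible_candidate N x u : (0 < N)%N ->
  admissible f X X0 U N x u ->
  admissible f X X0 U N (f x (u 0%N)) (candidate f kappa N x u).
Proof.
move=> N_gt0 adm; case: (adm) => [uU [_ trajX0]]; split; [|split].
- move=> k kN; rewrite /candidate; case: ifP => [kN1|_]; first by apply: uU; lia.
  by case: (kappa_invariant trajX0).
- move=> k k1 kN; rewrite traj_candidate; last by lia.
  by apply: admissible_traj_in adm _; lia.
- by rewrite traj_candidate_end //; case: (kappa_invariant trajX0).
Qed.

End Horizon.

Section Dissipative.
Variables (R : realType) (n m : nat) (f : 'rV[R]_n -> 'rV[R]_m -> 'rV[R]_n).
Variables (X X0 : set 'rV[R]_n) (U : set 'rV[R]_m).
Variables (l : 'rV[R]_n -> 'rV[R]_m -> R) (F : 'rV[R]_n -> R).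
Variables (kappa : 'rV[R]_n -> 'rV[R]_m) (xe : 'rV[R]_n) (lam : 'rV[R]_n -> R).
Variables (alpha gamma : R -> R) (c : R).
Hypothesis X0_sub : X0 `<=` X.
Hypotheses (Kalpha : Kinf alpha) (Kgamma : Kinf gamma).
Hypothesis dissipative : forall x u, X x -> U u -> X (f x u) ->
  alpha `|x - xe| <= l x u + lam x - lam (f x u).
Hypothesis lam_lbound : forall x, X x -> c <= lam x.
Hypothesis lam_bound : forall x, X x -> `|lam x| <= gamma `|x - xe|.
Hypothesis F_ge0 : forall x, X0 x -> 0 <= F x.
Hypothesis kappa_terminal : forall x, X0 x ->
  [/\ U (kappa x), X0 (f x (kappa x)) & F (f x (kappa x)) + l x (kappa x) <= F x].

Lemma rotated_cost_ge0 x u : X x -> U u -> X (f x u) -> 0 <= l x u + lam x - lam (f x u).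
Proof. by move=> xX uU fX; apply: le_trans (dissipative xX uU fX); apply: Kinf_ge0. Qed.

(* Along the trajectory of the terminal controller [F + lam] is nonincreasing and
   dominates [lam], which tends to [0] by dissipativity. *)
Lemma terminal_storage_ge0 z : X0 z -> 0 <= F z + lam z.
Proof.
move=> z0; pose w t := iter t (fun y => f y (kappa y)) z.
have w0 t : X0 (w t) by elim: t => [//|t IH]; case: (kappa_terminal IH).
pose d t := l (w t) (kappa (w t)) + lam (w t) - lam (w t.+1).
pose W t := F (w t) + lam (w t).
have Wd t : W t.+1 + d t <= W t.
  by case: (kappa_terminal (w0 t)) => _ _; rewrite /W /d /=; lra.
have alpha_d t : alpha `|w t - xe| <= d t.
  case: (kappa_terminal (w0 t)) => uU wX _.
  exact: dissipative (X0_sub (w0 t)) uU (X0_sub wX).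
have [_ lam_cvg] : cvgn (series d) /\ lam \o w @ \oo --> 0.
  apply: (dissipation_cvg (c := c) Kalpha Kgamma _ alpha_d _ Wd) => t.
  - exact: normr_ge0.
  - exact/lam_bound/X0_sub.
  - by rewrite /W; have := F_ge0 (w0 t); have := lam_lbound (X0_sub (w0 t)); lra.
apply: (ler_cvg_to lam_cvg (cvg_cst (W 0%N))); apply: nearW => t /=.
have W_le0 : W t <= W 0%N.
  elim: t => [//|t IH]; apply: le_trans IH.
  by have := Wd t; have := Kinf_ge0 Kalpha (normr_ge0 (w t - xe)); have := alpha_d t; lra.
by apply: le_trans W_le0; rewrite /W lerDr F_ge0.
Qed.

Lemma cost_storage_ge0 N x u : X x -> admissible f X X0 U N x u ->
  0 <= cost f l F N x u + lam x.
Proof.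
move=> xX adm.
have trajX j : (j <= N)%N -> X (traj f x u j).
  by case: j => [//|j] jN; exact: (admissible_traj_in X0_sub (j:=j.+1) adm jN).
have -> : cost f l F N x u + lam x =
    \sum_(k < N) (l (traj f x u k) (u k) + lam (traj f x u k) - lam (traj f x u k.+1))
    + (F (traj f x u N) + lam (traj f x u N)).
  have := sum_rotated (fun k => l (traj f x u k) (u k)) (fun k => lam (traj f x u k)) N.
  by rewrite /cost /= => ->; lra.
apply: addr_ge0; last exact: terminal_storage_ge0 adm.2.2.
apply: sumr_ge0 => k _; apply: rotated_cost_ge0.
- exact/trajX/ltnW.
- exact: adm.1.
- exact: (trajX k.+1).
Qed.

Lemma cost_candidate_le N x u : (0 < N)%N -> X0 (traj f x u N) ->
  cost f l F N (f x (u 0%N)) (candidate f kappa N x u) + l x (u 0%N) <= cost f l F N x u.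
Proof.
move=> N_gt0 xN0; rewrite cost_candidate //= gerDl subr_le0.
by case: (kappa_terminal xN0).
Qed.

Lemma closed_loop_performance N (xs : nat -> 'rV[R]_n) (us : nat -> nat -> 'rV[R]_m) :
  (0 < N)%N -> (forall k, X (xs k)) ->
  (forall k, xs k.+1 = f (xs k) (us k 0%N)) ->
  (forall k, admissible f X X0 U N (xs k) (us k)) ->
  (forall k, cost f l F N (xs k.+1) (us k.+1)
             <= cost f l F N (xs k.+1) (candidate f kappa N (xs k) (us k))) ->
  exists2 L, (fun K => \sum_(k < K) l (xs k) (us k 0%N)) @ \oo --> L
           & L <= cost f l F N (xs 0%N) (us 0%N).
Proof.
move=> N_gt0 xsX step adm opt.
pose V k := cost f l F N (xs k) (us k).
have V_decr k : V k.+1 + l (xs k) (us k 0%N) <= V k.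
  apply: le_trans (cost_candidate_le N_gt0 (adm k).2.2).
  by rewrite lerD2r /V -step; exact: opt.
pose d k := l (xs k) (us k 0%N) + lam (xs k) - lam (xs k.+1).
have [cvd lam_cvg] : cvgn (series d) /\ lam \o xs @ \oo --> 0.
  apply: (dissipation_cvg (e := fun k => `|xs k - xe|)
    (W := fun k => V k + lam (xs k)) (c := 0) Kalpha Kgamma) => k.
  - exact: normr_ge0.
  - rewrite /d step; apply: dissipative; rewrite -?step //.
    exact: (adm k).1 _ N_gt0.
  - exact: lam_bound.
  - by have := V_decr k; rewrite /d; lra.
  - exact: cost_storage_ge0 (xsX k) (adm k).
pose P K := \sum_(k < K) l (xs k) (us k 0%N).
have P_cvg : P @ \oo --> limn (series d) - lam (xs 0%N).
  have -> : P = fun K => series d K - lam (xs 0%N) + lam (xs K).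
    apply: funext => K; have := sum_rotated (fun k => l (xs k) (us k 0%N)) (lam \o xs) K.
    by rewrite /series /= big_mkord /d /P => ->; lra.
  rewrite -[limn _ - _]addr0; exact: cvgD (cvgB cvd (cvg_cst _)) lam_cvg.
exists (limn (series d) - lam (xs 0%N)) => //.
rewrite -[X in X <= _]subr0; apply: (ler_cvg_to (cvgB P_cvg lam_cvg) (cvg_cst (V 0%N))).
apply: nearW => K /=; have := sum_le_decrease K V_decr.
by have := cost_storage_ge0 (xsX K) (adm K); rewrite /P /V !fctE; lra.
Qed.

End Dissipative.

Section Algorithm.
Variables (R : realType) (n m N s : nat) (f : 'rV[R]_n -> 'rV[R]_m -> 'rV[R]_n).
Variables (X X0 : set 'rV[R]_n) (U : set 'rV[R]_m).
Variables (ell : 'I_s -> 'rV[R]_n -> 'rV[R]_m -> R) (F : 'rV[R]_n -> R).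
Variables (kappa : 'rV[R]_n -> 'rV[R]_m) (i1 : 'I_s) (x0 : 'rV[R]_n).

Lemma alg1_upto_efficient xs us K : alg1_upto f X X0 U ell F kappa N i1 x0 xs us K ->
  efficient f X X0 U ell F N (xs K) (us K).
Proof. by case: K => [|K] [_ [eff0 run]] //; case: (run K (ltnSn K)) => _ []. Qed.

Lemma alg1_run xs us : (forall K, alg1_upto f X X0 U ell F kappa N i1 x0 xs us K) ->
  [/\ xs 0%N = x0, forall k, xs k.+1 = f (xs k) (us k 0%N),
      forall k, efficient f X X0 U ell F N (xs k) (us k)
    & forall k, Jobj f ell F N i1 (xs k.+1) (us k.+1)
                <= Jobj f ell F N i1 (xs k.+1) (candidate f kappa N (xs k) (us k))].
Proof.
move=> run; have step k := (run k.+1).2.2 k (ltnSn k).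
split=> [|k|k|k]; first by case: (run 0%N).
- by case: (step k).
- exact: alg1_upto_efficient (run k).
- by case: (step k) => _ [].
Qed.

Hypothesis X0_sub : X0 `<=` X.
Hypothesis kappa_invariant : forall x, X0 x -> U (kappa x) /\ X0 (f x (kappa x)).
Hypothesis ext_stable :
  forall x, feasible_set f X X0 U N x -> externally_stable f X X0 U ell F N x.

Lemma efficient_le_candidate x u : (1 < N)%N -> admissible f X X0 U N x u ->
  exists up, efficient f X X0 U ell F N (f x (u 0%N)) up /\
    forall i, Jobj f ell F N i (f x (u 0%N)) up
              <= Jobj f ell F N i (f x (u 0%N)) (candidate f kappa N x u).
Proof.
move=> N_gt1 adm.
have adm' := admissible_candidate X0_sub kappa_invariant (ltnW N_gt1) adm.
have next_in := admissible_traj_in X0_sub (j:=1) adm (ltnW N_gt1).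
exact: ext_stable (conj next_in (ex_intro _ _ adm')) _ adm'.
Qed.

End Algorithm.

Unset Implicit Arguments.
Set Strict Implicit.

Theorem theorem4p5 (R : realType) (n m N s : nat)
  (f : 'rV[R]_n -> 'rV[R]_m -> 'rV[R]_n)
  (X X0 : set 'rV[R]_n) (U : set 'rV[R]_m)
  (ell : 'I_s -> 'rV[R]_n -> 'rV[R]_m -> R) (F1 : 'rV[R]_n -> R)
  (xe : 'rV[R]_n) (ue : 'rV[R]_m) (lambda1 : 'rV[R]_n -> R)
  (alpha1 gamma1 : R -> R) (kappa : 'rV[R]_n -> 'rV[R]_m) (x0 : 'rV[R]_n)
  (hN : (2 <= N)%N) (hs : (2 <= s)%N) :
  (* standing setting *)
  continuous (fun p : 'rV[R]_n * 'rV[R]_m => f p.1 p.2) ->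
  (exists x, X x) -> (exists u, U u) -> (exists x, X0 x) -> X0 `<=` X ->
  {within X0, continuous F1} -> (forall x, X0 x -> 0 <= F1 x) ->
  let ell1 := ell (Ordinal (ltnW hs)) in
  (* Assumption A (i) *)
  X xe -> U ue -> f xe ue = xe ->
  (* Assumption A (ii) *)
  (exists c : R, forall x, X x -> c <= lambda1 x) -> lambda1 xe = 0 ->
  Kinf alpha1 ->
  (forall x u, X x -> U u -> X (f x u) ->
     alpha1 (`|x - xe| + `|u - ue|)
       <= ell1 x u - ell1 xe ue + lambda1 x - lambda1 (f x u)) ->
  (* Assumption A (iii) *)
  (forall i, {within [set p : 'rV[R]_n * 'rV[R]_m | X p.1 /\ U p.2],
               continuous (fun p => ell i p.1 p.2)}) ->
  (* Assumption A (iv) *)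
  X0 xe ->
  (forall x, X0 x -> U (kappa x) /\ X0 (f x (kappa x)) /\
     F1 (f x (kappa x)) + ell1 x (kappa x) <= F1 x + ell1 xe ue) ->
  (* Assumption A (v) *)
  (forall x, feasible_set f X X0 U N x -> externally_stable f X X0 U ell F1 N x) ->
  (* additional hypotheses of the theorem *)
  feasible_set f X X0 U N x0 ->
  Kinf gamma1 ->
  (forall x, X x -> `|lambda1 x - lambda1 xe| <= gamma1 `|x - xe|) ->
  ell1 xe ue = 0 ->
  (* conclusions *)
  (* Algorithm 1 is well defined: step (0) is possible ... *)
  (exists u, efficient f X X0 U ell F1 N x0 u) /\
  (* ... and every run of steps 0..K can be continued by a step K+1 *)
  (forall (xs : nat -> 'rV[R]_n) (us : nat -> nat -> 'rV[R]_m) (K : nat),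
     alg1_upto f X X0 U ell F1 kappa N (Ordinal (ltnW hs)) x0 xs us K ->
     exists u, efficient f X X0 U ell F1 N (f (xs K) (us K 0%N)) u /\
       Jobj f ell F1 N (Ordinal (ltnW hs)) (f (xs K) (us K 0%N)) u
       <= Jobj f ell F1 N (Ordinal (ltnW hs)) (f (xs K) (us K 0%N))
            (candidate f kappa N (xs K) (us K))) /\
  (* every closed loop generated by Algorithm 1 stays in X and satisfies the
     performance bound *)
  (forall (xs : nat -> 'rV[R]_n) (us : nat -> nat -> 'rV[R]_m),
     (forall K, alg1_upto f X X0 U ell F1 kappa N (Ordinal (ltnW hs)) x0 xs us K) ->
     (forall k, X (xs k)) /\
     exists L : R,
       (fun K : nat => \sum_(k < K) ell1 (xs k) (us k 0%N)) @ \oo --> L /\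
       L <= Jobj f ell F1 N (Ordinal (ltnW hs)) x0 (us 0%N)).
Proof.
move=> _ _ _ _ X0_sub _ F1_ge0 ell1 _ _ _ [c lam_lbound] lam_xe Ka diss _ _ kappa_term
  ext feas0 Kg lam_gamma ell_xe.
set i1 := Ordinal (ltnW hs).
have N_gt0 : (0 < N)%N := ltnW hN.
have J1E x u : Jobj f ell F1 N i1 x u = cost f ell1 F1 N x u by exact: Jobj_cost.
have diss1 x u : X x -> U u -> X (f x u) ->
    alpha1 `|x - xe| <= ell1 x u + lambda1 x - lambda1 (f x u).
  move=> xX uU fX; have := diss x u xX uU fX; rewrite ell_xe subr0; apply: le_trans.
  by apply: Kinf_le => //; rewrite lerDl.
have lam_bound x : X x -> `|lambda1 x| <= gamma1 `|x - xe|.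
  by move=> /lam_gamma; rewrite lam_xe subr0.
have term x : X0 x ->
    [/\ U (kappa x), X0 (f x (kappa x)) & F1 (f x (kappa x)) + ell1 x (kappa x) <= F1 x].
  by case/kappa_term => uU [fX0]; rewrite ell_xe addr0.
have kappa_inv x : X0 x -> U (kappa x) /\ X0 (f x (kappa x)) by case/term.
split; first by case: (feas0) => _ [u /(ext _ feas0) [up [eff _]]]; exists up.
split.
  move=> xs us K /alg1_upto_efficient [adm _].
  by have [up [eff le_up]] := efficient_le_candidate X0_sub kappa_inv ext hN adm; exists up.
move=> xs us /alg1_run [xs0 step eff opt].
have xsX k : X (xs k).
  case: k => [|k]; first by rewrite xs0; case: feas0.
  by rewrite step; exact: (admissible_traj_in X0_sub (j:=1) (eff k).1 N_gt0).
split=> //.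
have [|L cvL leL] := closed_loop_performance X0_sub Ka Kg diss1 lam_lbound lam_bound F1_ge0
  term N_gt0 xsX step (fun k => (eff k).1).
  by move=> k; rewrite -!J1E.
by exists L; split=> //; rewrite J1E -xs0.
Qed.
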